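(* Let $\mathcal A$ be a unital $C^*$-algebra and $\mathcal F\subseteq\mathcal A$ an algebra of finite type elements. An element $a\in\mathcal A$ is of Fredholm type if and only if $a$ is invertible modulo $\mathcal F$, i.e. there exist $b_1,b_2\in\mathcal A$ with $ab_1-1\in\mathcal F$ and $b_2a-1\in\mathcal F$.
   Context: Let $\mathcal A$ be a unital $C^*$-algebra. A subalgebra $\mathcal F\subseteq\mathcal A$ is an algebra of finite type elements if: (i) $\mathcal F$ is a self-adjoint two-sided ideal of $\mathcal A$; (ii) $\mathcal F$ has an approximate unit consisting of projections, i.e. a net $(p_\alpha)$ of projections in $\mathcal F$ with $\|f-p_\alpha f\|\to0$ and $\|f-fp_\alpha\|\to0$ for every $f\in\mathcal F$; (iii) for any projections $p,q\in\mathcal F$ there is $v\in\mathcal A$ with $vv^*=q$ and $v^*vp=0$. For $a\in\mathcal A$ and projections $p,q\in\mathcal A$, $a$ is invertible up to $(p,q)$ if there is $b\in\mathcal A$ with $b=(1-p)b(1-q)$, $(1-q)a(1-p)b=1-q$ and $b(1-q)a(1-p)=1-p$. $a$ is of Fredholm type if it is invertible up to $(p,q)$ for some projections $p,q\in\mathcal F$. *)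

From HB Require Import structures.
From mathcomp Require Import all_boot all_order all_algebra.
From mathcomp Require Import reals.
From mathcomp.real_closed Require Import complex.
Set Implicit Arguments. Unset Strict Implicit. Unset Printing Implicit Defensive.
Import Order.TTheory GRing.Theory Num.Theory.
Local Open Scope ring_scope.
Local Open Scope complex_scope.

Section CStar.
Variables (R : realType) (A : algType R[i]) (nrm : A -> R) (star : A -> A).

Record is_cstar_algebra : Prop := {
  nrm_ge0 : forall a, 0 <= nrm a;
  nrm_eq0 : forall a, nrm a = 0 -> a = 0;
  nrm_triangle : forall a b, nrm (a + b) <= nrm a + nrm b;
  nrm_scale : forall (c : R[i]) a, (nrm (c *: a))%:C = `|c| * (nrm a)%:C;
  nrm_submul : forall a b, nrm (a * b) <= nrm a * nrm b;
  nrm_complete : forall u : nat -> A,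
    (forall eps : R, 0 < eps -> exists N, forall m n, (N <= m)%N -> (N <= n)%N ->
        nrm (u m - u n) < eps) ->
    exists l : A, forall eps : R, 0 < eps -> exists N, forall n, (N <= n)%N ->
        nrm (u n - l) < eps;
  star_add : forall a b, star (a + b) = star a + star b;
  star_scale : forall (c : R[i]) a, star (c *: a) = (c^*)%C *: star a;
  star_mul : forall a b, star (a * b) = star b * star a;
  star_invol : forall a, star (star a) = a;
  cstar_identity : forall a, nrm (star a * a) = nrm a ^+ 2
}.

Definition is_projection (p : A) : Prop := p * p = p /\ star p = p.

Definition is_selfadjoint_ideal (F : A -> Prop) : Prop :=
  [/\ F 0,
      (forall f g, F f -> F g -> F (f + g)),
      (forall (c : R[i]) f, F f -> F (c *: f)),
      (forall a f, F f -> F (a * f) /\ F (f * a)) &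
      (forall f, F f -> F (star f))].

Definition has_projection_approx_unit (F : A -> Prop) : Prop :=
  exists (I : Type) (le : I -> I -> Prop) (p : I -> A),
    [/\ (forall i, le i i),
        (forall i j k, le i j -> le j k -> le i k),
        (forall i j, exists k, le i k /\ le j k),
        (forall i, is_projection (p i) /\ F (p i)) &
        (forall f, F f -> forall eps : R, 0 < eps -> exists i0, forall i, le i0 i ->
            nrm (f - p i * f) < eps /\ nrm (f - f * p i) < eps)].

Definition is_finite_type_algebra (F : A -> Prop) : Prop :=
  [/\ is_selfadjoint_ideal F,
      has_projection_approx_unit F &
      (forall p q, is_projection p -> F p -> is_projection q -> F q ->
         exists v : A, v * star v = q /\ star v * v * p = 0)].

Definition invertible_upto (a p q : A) : Prop :=
  exists b : A, [/\ b = (1 - p) * b * (1 - q),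
                    (1 - q) * a * (1 - p) * b = 1 - q &
                    b * ((1 - q) * a * (1 - p)) = 1 - p].

Definition fredholm_type (F : A -> Prop) (a : A) : Prop :=
  exists p q : A, [/\ is_projection p, F p, is_projection q, F q &
                      invertible_upto a p q].

Definition invertible_modulo (F : A -> Prop) (a : A) : Prop :=
  exists b1 b2 : A, F (a * b1 - 1) /\ F (b2 * a - 1).

End CStar.

From mathcomp Require Import all_boot all_order all_algebra.
From mathcomp Require Import reals.
From mathcomp.real_closed Require Import complex.
From mathcomp Require Import lra.
Set Implicit Arguments.
Unset Strict Implicit.
Unset Printing Implicit Defensive.
Import Order.TTheory GRing.Theory Num.Theory.
Local Open Scope ring_scope.
Local Open Scope complex_scope.

(* Modulo F the projections p and q vanish, so an inverse of the corner (1 - q) a (1 - p)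
   is an inverse of a modulo F.
   Conversely, write a b1 = 1 + f with f in F.  A projection q of the approximate unit with
   ||f - q f|| < 1 makes u + u f u invertible in the corner of u = 1 - q (Neumann series), which
   yields r = b1 z with (u a) r = u and r = b1 modulo F.  As b1 is also a left inverse of a
   modulo F, K = 1 - r u a is an idempotent of F with (u a) K = 0.  Kaplansky's formula
   k = K K^* (1 + (K - K^* )^* (K - K^* ))^-1 turns it into a projection with K k = k and
   k K = K; hence k lies in F and (1 - k) r inverts a up to (k, q).  That 1 + d^* d is
   invertible comes from Arens' trick: for self-adjoint h and t = ||h||^2 one has
   ||h + i t|| < 1 + t, so i - h = i (1 + t) - (h + i t) is invertible. *)

Section GeometricDecay.
Variable R : archiRealFieldType.

Lemma expr_mul1BnD_le1 (r : R) n : 0 <= r <= 1 -> r ^+ n * (1 + n%:R * (1 - r)) <= 1.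
Proof.
move=> /andP[r0 r1]; elim: n => [|n IH]; first by rewrite mul0r addr0 mulr1.
have rn1 : r * r ^+ n <= 1 by rewrite -exprS exprn_ile1.
rewrite exprS -natr1.
have : 0 <= r * (1 - r ^+ n * (1 + n%:R * (1 - r))) by rewrite mulr_ge0 ?subr_ge0.
have : 0 <= (1 - r * r ^+ n) * (1 - r) by rewrite mulr_ge0 ?subr_ge0.
nra.
Qed.

Lemma expr_lt_eventually (r eps : R) : 0 <= r < 1 -> 0 < eps ->
  exists N, forall n, (N <= n)%N -> r ^+ n < eps.
Proof.
move=> /andP[r0 r1] eps0; set s := 1 - r.
have s0 : 0 < s by rewrite subr_gt0.
set N := (Num.truncn (eps * s)^-1).+1.
have hN : (eps * s)^-1 < N%:R := truncnS_gt _.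
have Ns : 1 < eps * (N%:R * s).
  have es : 0 < eps * s by rewrite mulr_gt0.
  have := mulVf (lt0r_neq0 es); nra.
exists N => n Nn; apply: le_lt_trans (ler_wiXn2l r0 (ltW r1) Nn) _.
have : r ^+ N * (1 + N%:R * s) <= 1 by apply: expr_mul1BnD_le1; rewrite r0 ltW.
have := exprn_ge0 N r0; nra.
Qed.

End GeometricDecay.

Section RingIdentities.
Variable A : pzRingType.
Implicit Types (r t u w x : A).

Fixpoint geosum x n : A := if n is k.+1 then geosum x k + x ^+ k else 0.

Lemma geosum_mulBl x n : (1 - x) * geosum x n = 1 - x ^+ n.
Proof.
elim: n => [|n IH] /=; first by rewrite mulr0 expr0 subrr.
by rewrite mulrDr IH mulrBl mul1r -exprS addrA subrK.
Qed.

Lemma geosum_mulBr x n : geosum x n * (1 - x) = 1 - x ^+ n.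
Proof.
elim: n => [|n IH] /=; first by rewrite mul0r expr0 subrr.
by rewrite mulrDl IH mulrBr mulr1 -exprSr addrA subrK.
Qed.

Lemma idem_1B x : x * x = x -> (1 - x) * (1 - x) = 1 - x.
Proof. by move=> xx; rewrite mulrBr mulr1 mulrBl mul1r xx subrr subr0. Qed.

Lemma idem_1B_mul r t : r * t * r = r -> (1 - r * t) * (1 - r * t) = 1 - r * t.
Proof. by move=> rtr; apply: idem_1B; rewrite mulrA rtr. Qed.

Lemma corner_inverse u x w : u * u = u -> u * x = x -> x * u = x ->
    (1 + x) * w = 1 -> w * (1 + x) = 1 ->
  let z := u * w * u in [/\ (u + x) * z = u, z * (u + x) = u, u * z = z & z * u = z].
Proof.
move=> uu ux xu xw wx z.
have uxL : u + x = u * (1 + x) by rewrite mulrDr mulr1 ux.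
have uxR : u + x = (1 + x) * u by rewrite mulrDl mul1r xu.
have uxu : (u + x) * u = u + x by rewrite mulrDl uu xu.
have uux : u * (u + x) = u + x by rewrite mulrDr uu ux.
split; rewrite /z.
- by rewrite !mulrA uxu uxL -(mulrA u) xw mulr1 uu.
- by rewrite -!mulrA uux uxR (mulrA w) wx mul1r uu.
- by rewrite !mulrA uu.
- by rewrite -mulrA uu.
Qed.

Definition invertible x := exists y, x * y = 1 /\ y * x = 1.

Lemma inverse_unique w x y : w * x = 1 -> x * y = 1 -> w = y.
Proof. by move=> wx xy; rewrite -[w]mulr1 -xy mulrA wx mul1r. Qed.

Lemma inverse_comm x y t : x * y = 1 -> y * x = 1 -> x * t = t * x -> y * t = t * y.
Proof.
move=> xy yx xt.
by rewrite -[y * t]mulr1 -xy mulrA -(mulrA y t x) -xt (mulrA y x t) yx mul1r.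
Qed.

Lemma invertibleN x : invertible x -> invertible (- x).
Proof. by case=> y [xy yx]; exists (- y); rewrite mulrNN xy mulrNN yx. Qed.

Lemma invertibleM x y : invertible x -> invertible y -> invertible (x * y).
Proof.
case=> x' [xx' x'x] [y' [yy' y'y]]; exists (y' * x'); split.
- by rewrite mulrA -(mulrA x) yy' mulr1 xx'.
- by rewrite mulrA -(mulrA y') x'x mulr1 y'y.
Qed.

End RingIdentities.

Lemma invertibleZ (K : fieldType) (A : algType K) (c : K) (x : A) :
  c != 0 -> invertible x -> invertible (c *: x).
Proof.
move=> c0 [y [xy yx]]; exists (c^-1 *: y).
by rewrite -scalerAl -scalerAr scalerA xy mulfV // scale1r
  -scalerAl -scalerAr scalerA yx mulVf // scale1r.
Qed.

Lemma invertible_upto_of_kernel_idem (R : realType) (A : algType R[i]) (a q k r : A) :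
    q * q = q -> k * k = k ->
    (1 - q) * a * r = 1 - q -> r * (1 - q) = r ->
    let K := 1 - r * ((1 - q) * a) in K * k = k -> k * K = K ->
  invertible_upto a k q.
Proof.
set u := 1 - q; set T := u * a => qq kk Tr ru K Kk kK.
have uT : u * T = T by rewrite mulrA idem_1B.
have TK : T * K = 0 by rewrite mulrBr mulr1 mulrA Tr uT subrr.
have Tk : T * (1 - k) = T by rewrite mulrBr mulr1 -Kk mulrA TK mul0r subr0.
have rT : r * T = 1 - K by rewrite opprB addrC subrK.
exists ((1 - k) * r); split; rewrite -/u -/T.
- by rewrite mulrA idem_1B // -mulrA ru.
- by rewrite Tk mulrA Tk Tr.
- by rewrite Tk -mulrA rT mulrBr mulr1 mulrBl mul1r kK subrr subr0.
Qed.

Section IdealCongruence.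
Variables (R : realType) (A : algType R[i]) (star : A -> A) (F : A -> Prop).
Hypothesis HF : is_selfadjoint_ideal star F.

Definition eqmod (x y : A) := F (x - y).

Lemma idealMl a {f} : F f -> F (a * f).
Proof. by case: HF => _ _ _ hM _ /(hM a) []. Qed.

Lemma idealMr a {f} : F f -> F (f * a).
Proof. by case: HF => _ _ _ hM _ /(hM a) []. Qed.

Lemma idealN f : F f -> F (- f).
Proof. by case: HF => _ _ hZ _ _ /(hZ (-1)); rewrite scaleN1r. Qed.

Lemma eqmod_refl x : eqmod x x.
Proof. by case: HF => h0 _ _ _ _; rewrite /eqmod subrr. Qed.

Lemma eqmod_sym {x y} : eqmod x y -> eqmod y x.
Proof. by move=> /idealN; rewrite opprB. Qed.

Lemma eqmod_trans {y x z} : eqmod x y -> eqmod y z -> eqmod x z.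
Proof.
by case: HF => _ hD _ _ _ h1 h2; have := hD _ _ h1 h2; rewrite addrA subrK.
Qed.

Lemma eqmodD {x x' y y'} : eqmod x x' -> eqmod y y' -> eqmod (x + y) (x' + y').
Proof.
by case: HF => _ hD _ _ _ h1 h2; have := hD _ _ h1 h2; rewrite /eqmod opprD addrACA.
Qed.

Lemma eqmodM {x x' y y'} : eqmod x x' -> eqmod y y' -> eqmod (x * y) (x' * y').
Proof.
case: HF => _ hD _ _ _ h1 h2; have := hD _ _ (idealMr y h1) (idealMl x' h2).
by rewrite /eqmod mulrBl mulrBr addrA subrK.
Qed.

Lemma eqmod_ideal {f} : F f -> eqmod f 0.
Proof. by rewrite /eqmod subr0. Qed.

Lemma eqmod_1B {q} : F q -> eqmod (1 - q) 1.
Proof. by move=> /idealN; rewrite /eqmod addrAC subrr add0r. Qed.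

Lemma eqmod_inverse_sym a b1 b2 :
  eqmod (a * b1) 1 -> eqmod (b2 * a) 1 -> eqmod (b1 * a) 1.
Proof.
move=> ab1 b2a; apply: (eqmod_trans _ b2a); apply: eqmodM _ (eqmod_refl a).
have := eqmodM (eqmod_refl b2) (eqmod_sym ab1); rewrite mulr1 mulrA => b2b1.
apply: eqmod_sym (eqmod_trans b2b1 _).
by have := eqmodM b2a (eqmod_refl b1); rewrite mul1r.
Qed.

Lemma fredholm_invertible_modulo a : fredholm_type star F a -> invertible_modulo F a.
Proof.
case=> p [q [_ Fp _ Fq [b [_ hb1 hb2]]]].
have ha : eqmod ((1 - q) * a * (1 - p)) a.
  by have := eqmodM (eqmodM (eqmod_1B Fq) (eqmod_refl a)) (eqmod_1B Fp); rewrite mul1r mulr1.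
exists b, b; split.
- apply: (eqmod_trans (eqmodM (eqmod_sym ha) (eqmod_refl b))).
  by rewrite hb1; apply: eqmod_1B.
- apply: (eqmod_trans (eqmodM (eqmod_refl b) (eqmod_sym ha))).
  by rewrite hb2; apply: eqmod_1B.
Qed.

End IdealCongruence.

Section CStarAlgebra.
Variables (R : realType) (A : algType R[i]) (nrm : A -> R) (star : A -> A).
Hypothesis HC : is_cstar_algebra nrm star.

Lemma nrmZ (c : R[i]) (s : R) x : `|c| = s%:C -> nrm (c *: x) = s * nrm x.
Proof. by move=> cs; apply: complexI; rewrite (nrm_scale HC) cs rmorphM. Qed.

Lemma nrm0 : nrm 0 = 0.
Proof. by rewrite -(scale0r (0 : A)) (@nrmZ 0 0) ?mul0r // normr0. Qed.

Lemma nrmN x : nrm (- x) = nrm x.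
Proof. by rewrite -scaleN1r (@nrmZ (-1) 1) ?mul1r // normrN1. Qed.

Lemma nrm_distC x y : nrm (x - y) = nrm (y - x).
Proof. by rewrite -nrmN opprB. Qed.

Lemma nrm_le_eps_eq0 x : (forall eps : R, 0 < eps -> nrm x <= eps) -> x = 0.
Proof.
move=> small; apply: (nrm_eq0 HC); apply/eqP; rewrite eq_le (nrm_ge0 HC) andbT.
by apply/ler_addgt0Pr => eps /small; rewrite add0r.
Qed.

Lemma star1 : star 1 = 1.
Proof.
by have := star_mul HC (star 1) 1; rewrite mulr1 !(star_invol HC) mulr1 => <-.
Qed.

Lemma starN x : star (- x) = - star x.
Proof. by rewrite -scaleN1r (star_scale HC) -[in RHS]scaleN1r; congr (_ *: _); simpc. Qed.

Lemma starB x y : star (x - y) = star x - star y.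
Proof. by rewrite (star_add HC) starN. Qed.

Lemma nrm1_le1 : nrm 1 <= 1.
Proof.
have := cstar_identity HC 1; rewrite star1 mulr1 => h.
have := nrm_ge0 HC 1; nra.
Qed.

Lemma nrm_proj_le1 p : is_projection star p -> nrm p <= 1.
Proof.
case=> pp ps; have := cstar_identity HC p; rewrite ps pp.
have := nrm_ge0 HC p; nra.
Qed.

Lemma nrmX_le x n : nrm (x ^+ n) <= nrm x ^+ n.
Proof.
elim: n => [|n IH]; first by rewrite !expr0 nrm1_le1.
rewrite !exprS; apply: le_trans (nrm_submul HC _ _) _.
by rewrite ler_wpM2l ?(nrm_ge0 HC).
Qed.

Lemma nrm_geosumD_le x m k : nrm x < 1 ->
  nrm (geosum x (m + k) - geosum x m) * (1 - nrm x) <= nrm x ^+ m - nrm x ^+ (m + k).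
Proof.
move=> x1; elim: k => [|k IH]; first by rewrite addn0 !subrr nrm0 mul0r.
rewrite addnS /= addrAC exprS.
have := nrm_triangle HC (geosum x (m + k) - geosum x m) (x ^+ (m + k)).
have := nrmX_le x (m + k); have : 0 <= 1 - nrm x by rewrite subr_ge0 ltW.
nra.
Qed.

Lemma geosum_cauchy x : nrm x < 1 -> forall eps : R, 0 < eps ->
  exists N, forall m n, (N <= m)%N -> (N <= n)%N -> nrm (geosum x m - geosum x n) < eps.
Proof.
move=> x1 eps eps0; have s0 : 0 < 1 - nrm x by rewrite subr_gt0.
have x01 : 0 <= nrm x < 1 by rewrite (nrm_ge0 HC) x1.
have [N small] := expr_lt_eventually x01 (mulr_gt0 eps0 s0).
have ordered m n : (N <= m)%N -> (m <= n)%N -> nrm (geosum x n - geosum x m) < eps.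
  move=> Nm /subnKC <-; have := nrm_geosumD_le m (n - m) x1.
  have := small m Nm; have := exprn_ge0 (m + (n - m)) (nrm_ge0 HC x).
  have := nrm_ge0 HC (geosum x (m + (n - m)) - geosum x m); nra.
exists N => m n Nm Nn; case: (leqP m n) => [mn|/ltnW nm].
  by rewrite nrm_distC; apply: ordered.
exact: ordered.
Qed.

Lemma invertible_1B x : nrm x < 1 -> invertible (1 - x).
Proof.
move=> x1; have [l lim_l] := nrm_complete HC (geosum_cauchy x1).
set C := nrm (1 - x); have C0 : 0 <= C := nrm_ge0 HC _.
have close eps : 0 < eps -> exists n, C * nrm (l - geosum x n) + nrm (x ^+ n) <= eps.
  move=> eps0; set d := eps / (C + 1).
  have Cd : d * (C + 1) = eps by rewrite divfK // lt0r_neq0 // ltr_wpDl.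
  have d0 : 0 < d by rewrite divr_gt0 // ltr_wpDl.
  have [N1 near_l] := lim_l d d0.
  have x01 : 0 <= nrm x < 1 by rewrite (nrm_ge0 HC) x1.
  have [N2 small] := expr_lt_eventually x01 d0.
  exists (maxn N1 N2); rewrite nrm_distC.
  have := near_l _ (leq_maxl N1 N2); have := small _ (leq_maxr N1 N2).
  have := nrmX_le x (maxn N1 N2); nra.
exists l; split; apply: subr0_eq; apply: nrm_le_eps_eq0 => eps /close [n]; apply: le_trans.
- have -> : (1 - x) * l - 1 = (1 - x) * (l - geosum x n) - x ^+ n.
    by rewrite mulrBr geosum_mulBl opprB addrA addrAC addrK.
  apply: le_trans (nrm_triangle HC _ _) _.
  by rewrite nrmN lerD2r (nrm_submul HC).
- have -> : l * (1 - x) - 1 = (l - geosum x n) * (1 - x) - x ^+ n.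
    by rewrite mulrBl geosum_mulBr opprB addrA addrAC addrK.
  apply: le_trans (nrm_triangle HC _ _) _.
  by rewrite nrmN lerD2r mulrC (nrm_submul HC).
Qed.

Lemma nrm_add_iC_lt h : star h = h ->
  nrm (h + ('i * (nrm h ^+ 2)%:C) *: 1) < 1 + nrm h ^+ 2.
Proof.
move=> hs; set t := nrm h ^+ 2; set g := h + _.
have t0 : 0 <= t by rewrite exprn_ge0 // (nrm_ge0 HC).
have gg : star g * g = h * h + (t ^+ 2)%:C *: 1.
  rewrite /g (star_add HC) (star_scale HC) hs star1.
  rewrite mulrDl !mulrDr -!scalerAl -!scalerAr !mul1r !mulr1 scalerA.
  have -> : ('i * t%:C)^*%C = - ('i * t%:C) by simpc.
  have -> : - ('i * t%:C) * ('i * t%:C) = (t ^+ 2)%:C by simpc; rewrite expr2.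
  by rewrite scaleNr addrA addrK.
have g2 : nrm g ^+ 2 <= t + t ^+ 2.
  rewrite -(cstar_identity HC) gg; apply: le_trans (nrm_triangle HC _ _) _.
  rewrite (nrmZ (s := t ^+ 2)); last by rewrite ger0_norm // ler0c exprn_ge0.
  have := nrm_submul HC h h; have := nrm1_le1; have := nrm_ge0 HC h.
  rewrite /t expr2; nra.
have := nrm_ge0 HC g; move: g2; set ng := nrm g; nra.
Qed.

Lemma invertible_iC_sub h : star h = h -> invertible ('i *: 1 - h).
Proof.
move=> /nrm_add_iC_lt; set t := nrm h ^+ 2; set g := h + _ => g_lt.
have t1 : 0 < 1 + t by rewrite ltr_wpDr ?exprn_ge0 ?(nrm_ge0 HC).
set mu : R[i] := 'i * (1 + t)%:C.
have mu0 : mu != 0 by rewrite mulf_neq0 ?neq0Ci // eq_complex /= negb_and gt_eqF.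
have mu_inv : `|mu^-1| = ((1 + t)^-1)%:C.
  by rewrite normfV normrM normCi mul1r ger0_norm ?ler0c ?ltW // fmorphV.
have : nrm (mu^-1 *: g) < 1 by rewrite (nrmZ _ mu_inv) mulrC ltr_pdivrMr ?mul1r.
move=> /invertible_1B /(invertibleZ mu0).
congr invertible; rewrite scalerBr scalerA mulfV // scale1r /g opprD addrA addrAC.
by rewrite -scalerBl /mu rmorphD /= rmorph1 mulrDr mulr1 addrK.
Qed.

Lemma invertible_1B_sqr_skew d : star d = - d -> invertible (1 - d * d).
Proof.
move=> ds; set h := 'i *: d.
have hs : star h = h by rewrite (star_scale HC) ds scalerN -scaleNr; congr (_ *: _); simpc.
have hNs : star (- h) = - h by rewrite starN hs.
have -> : 1 - d * d = - (('i *: 1 - h) * ('i *: 1 - - h)).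
  rewrite opprK mulrDr !mulrBl -!scalerAl -!scalerAr !mul1r !mulr1.
  have ii : 'i * 'i = -1 :> R[i] by simpc.
  by rewrite !scalerA ii !scaleN1r !opprK addrA addrK opprD opprK.
by apply/invertibleN/invertibleM; apply: invertible_iC_sub.
Qed.

Lemma idem_range_projection e : e * e = e ->
  exists k, [/\ is_projection star k, e * k = k & k * e = e].
Proof.
move=> ee; have es : star e * star e = star e by rewrite -(star_mul HC) ee.
set d := e - star e; have ds : star d = - d by rewrite starB (star_invol HC) opprB.
have [w [zw wz]] := invertible_1B_sqr_skew ds; set z := 1 - d * d in zw wz.
have ed : e * d = e - e * star e by rewrite mulrBr ee.
have de : d * e = e - star e * e by rewrite mulrBl ee.
have esd : star e * d = star e * e - star e by rewrite mulrBr es.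
have des : d * star e = e * star e - star e by rewrite mulrBl es.
have edd : e * (d * d) = e - e * star e * e.
  rewrite mulrA ed mulrBl ed -(mulrA e (star e) d) esd mulrBr mulrA.
  by rewrite opprB addrA subrK.
have dde : d * d * e = e - e * star e * e.
  rewrite -mulrA de mulrBr de mulrA des mulrBl.
  by rewrite opprB addrA subrK.
have ez : e * z = e * star e * e by rewrite mulrBr mulr1 edd subKr.
have ze : z * e = e * star e * e by rewrite mulrBl mul1r dde subKr.
have we : w * e = e * w by apply: inverse_comm zw wz _; rewrite ez ze.
have zs : star z = z by rewrite starB star1 (star_mul HC) ds mulrNN.
have ws : star w = w.
  apply: (inverse_unique _ zw).
  by rewrite -[X in _ * X]zs -(star_mul HC) zw star1.
have wes : w * star e = star e * w.
  by have := congr1 star we; rewrite !(star_mul HC) ws.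
have kE : e * star e * w * e = e by rewrite -mulrA we mulrA -ez -mulrA zw mulr1.
exists (e * star e * w); split; first split.
- by rewrite !mulrA kE.
- by rewrite !(star_mul HC) (star_invol HC) ws mulrA we -mulrA wes mulrA.
- by rewrite !mulrA ee.
- exact: kE.
Qed.

End CStarAlgebra.

Section FiniteTypeIdeal.
Variables (R : realType) (A : algType R[i]) (nrm : A -> R) (star : A -> A) (F : A -> Prop).
Hypotheses (HC : is_cstar_algebra nrm star) (HF : is_selfadjoint_ideal star F).

Lemma corner_right_inverse a b q : is_projection star q -> F q ->
    F (a * b - 1) -> nrm (a * b - 1 - q * (a * b - 1)) < 1 ->
  exists r, [/\ (1 - q) * a * r = 1 - q, r * (1 - q) = r & eqmod F r b].
Proof.
move=> [qq qs] Fq; set f := a * b - 1 => Ff f_lt; set u := 1 - q.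
have uu : u * u = u by rewrite idem_1B.
have u_proj : is_projection star u by rewrite /is_projection uu (starB HC) (star1 HC) qs.
set x := u * f * u; have Fx : F x by apply/(idealMr HF)/(idealMl HF).
have ux : u * x = x by rewrite /x !mulrA uu.
have xu : x * u = x by rewrite /x -mulrA uu.
have x_lt : nrm (- x) < 1.
  rewrite (nrmN HC); apply: le_lt_trans (nrm_submul HC _ _) _.
  have -> : u * f = f - q * f by rewrite mulrBl mul1r.
  have := nrm_proj_le1 HC u_proj; have := nrm_ge0 HC (f - q * f); nra.
have [w []] := invertible_1B HC x_lt; rewrite opprK => xw wx.
have [uxz zux uz zu] := corner_inverse uu ux xu xw wx.
set z := u * w * u in uxz zux uz zu.
have z1 : eqmod F z 1.
  have ux1 : eqmod F (u + x) 1.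
    by have := eqmodD HF (eqmod_1B HF Fq) (eqmod_ideal Fx); rewrite addr0.
  have := eqmodM HF (eqmod_refl HF z) ux1; rewrite zux mulr1 => uz1.
  exact: (eqmod_trans HF (eqmod_sym HF uz1) (eqmod_1B HF Fq)).
exists (b * z); split.
- have ab : a * b = 1 + f by rewrite subrKC.
  rewrite -[RHS]uxz mulrA -(mulrA u) ab mulrDr mulr1 mulrDl [RHS]mulrDl.
  congr (_ + _).
  by rewrite /x -[in LHS]uz !mulrA.
- by rewrite -mulrA zu.
- by have := eqmodM HF (eqmod_refl HF b) z1; rewrite mulr1.
Qed.

Lemma invertible_modulo_fredholm a : has_projection_approx_unit nrm star F ->
  invertible_modulo F a -> fredholm_type star F a.
Proof.
case=> I [le [p [le_refl _ _ p_proj near_one]]] [b1 [b2 [ab1 b2a]]].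
have [i0 /(_ i0 (le_refl i0)) [q_small _]] := near_one _ ab1 1 ltr01.
have [q_proj Fq] := p_proj i0; set q := p i0 in q_proj Fq q_small.
have [r [Tr ru rb1]] := corner_right_inverse q_proj Fq ab1 q_small.
set K := 1 - r * ((1 - q) * a).
have FK : F K.
  apply: (eqmod_sym HF); apply: (eqmod_trans HF _ (eqmod_inverse_sym HF ab1 b2a)).
  apply: (eqmodM HF rb1).
  by have := eqmodM HF (eqmod_1B HF Fq) (eqmod_refl HF a); rewrite mul1r.
have KK : K * K = K by apply: idem_1B_mul; rewrite -mulrA Tr ru.
have [k [k_proj Kk kK]] := idem_range_projection HC KK.
exists k, q; split => //; first by rewrite -Kk; apply: (idealMr HF).
by apply: invertible_upto_of_kernel_idem Tr ru Kk kK; [case: q_proj | case: k_proj].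
Qed.

End FiniteTypeIdeal.

Theorem mainTheorem5 (R : realType) (A : algType R[i]) (nrm : A -> R)
    (star : A -> A) (F : A -> Prop) :
  is_cstar_algebra nrm star ->
  is_finite_type_algebra nrm star F ->
  forall a : A, fredholm_type star F a <-> invertible_modulo F a.
Proof.
move=> HC [HF approx _] a; split.
- exact: (fredholm_invertible_modulo HF).
- exact: (invertible_modulo_fredholm HC HF approx).
Qed.
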